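(* Let $t\geqslant 2$, $r\in\{2t,2t+1\}$ and $n\geqslant 2r-1$. (1) Let $2\leqslant s\leqslant r$ and $\ell=2s-1$. Let $I^{\ell}\in\mathrm{Sym}_n$ be a permutation whose non-trivial cycles are one cycle of length $\ell$ and $r-s$ cycles of length $2$, so that $w_H(I^\ell)=2r-1$. Then $$|N_3(I^{\ell})|=\begin{cases}\ell\sum_{i=1}^{s-1}\binom{r-s}{t-i}, & r=2t,\\[2pt] \ell\sum_{i=1}^{s-2}\binom{r-s}{t-i}, & r=2t+1.\end{cases}$$ (2) Let $2\leqslant s\leqslant r-2$ and $\ell=2s$. Let $I^{\ell}\in\mathrm{Sym}_n$ be a permutation whose non-trivial cycles are one cycle of length $\ell$, one cycle of length $3$ and $r-s-2$ cycles of length $2$, so that $w_H(I^\ell)=2r-1$. Then $$|N_3(I^{\ell})|=\begin{cases}2(\ell+3)\binom{r-s-2}{t-1}+\ell\sum_{i=1}^{s-2}\binom{r-s-1}{t-i-1}, & r=2t,\\[2pt] \ell\sum_{i=1}^{s-1}\binom{r-s-1}{t-i}, & r=2t+1.\end{cases}$$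
   Context: $\mathrm{Sym}_n$ is the symmetric group on $[n]$, and $w_H(\pi)=|\{i:\pi(i)\neq i\}|$. $Tc(\pi)=\{(i,\pi(i)):\pi(i)\neq i\}$. For $\pi$ with $w_H(\pi)=2r-1$, $N_3(\pi)=\{\sigma\in\mathrm{Sym}_n:|Tc(\sigma)\cap Tc(\pi)|=r-1,\ |Tc(\sigma)|=r\}$. Binomial convention: $\binom{0}{0}=1$ and $\binom{p}{q}=0$ if $p<q$, $p<0$ or $q<0$. Empty sums are $0$. *)

From mathcomp Require Import all_boot all_order all_algebra all_fingroup.
Set Implicit Arguments. Unset Strict Implicit. Unset Printing Implicit Defensive.

Definition wH (n : nat) (p : {perm 'I_n}) : nat := #|[set i | p i != i]|.

Definition Tc (n : nat) (p : {perm 'I_n}) : {set 'I_n * 'I_n} :=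
  [set x | (x.2 == p x.1) && (p x.1 != x.1)].

Definition N3 (n r : nat) (p : {perm 'I_n}) : {set {perm 'I_n}} :=
  [set q | (#|Tc q :&: Tc p| == r.-1) && (#|Tc q| == r)].

Definition cycle_count (n : nat) (p : {perm 'I_n}) (k : nat) : nat :=
  #|[set X in porbits p | #|X| == k]|.

Definition binz (a : nat) (b : int) : nat :=
  match b with Posz k => 'C(a, k) | Negz _ => 0 end.

(* Let s have r non-fixed points, r - 1 of which (the set S) it maps as p does,
   and let y be the remaining one.  Then p maps S into S + {y}, and since s is a
   bijection of S + {y} one finds that S consists of whole non-trivial cycles of
   p plus an initial arc z, p z, ..., p^(m-1) z of one further cycle, where
   z = s y and y = p^m z with 1 <= m <= |cycle| - 2.  Conversely every such
   choice of (z, m, cycles) of total size r - 1 gives exactly one s: follow p on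
   S, send y to z, fix the rest.  Hence
     |N3(p)| = sum over cycles X of p of |X| * sum_(1 <= m <= |X| - 2) f(X, m),
   f(X, m) counting families of non-trivial cycles other than X of total size
   r - 1 - m.  When those cycles are transpositions, f(X, m) is a binomial
   coefficient that vanishes unless r - 1 - m is even; splitting the sum over m
   by parity and applying Pascal's rule and the symmetry of binomial
   coefficients gives the closed forms. *)

From mathcomp Require Import all_boot all_order all_algebra all_fingroup.
From mathcomp Require Import zify.
Set Implicit Arguments. Unset Strict Implicit. Unset Printing Implicit Defensive.

Section Families.
Variable T : finType.
Implicit Types (F A : {set {set T}}).

Definition weight F := \sum_(X in F) #|X|.

(* The number of subfamilies of [A] of total size [c - m], stated additively to
   avoid truncated subtraction. *)
Definition nfam A (c m : nat) := #|[set F : {set {set T}} | (F \subset A) && (weight F + m == c)]|.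

End Families.

(** * Shortcuts of a permutation *)

Section Shortcut.
Variables (T : finType) (p : {perm T}).
Implicit Types (s : {perm T}) (x z : T) (F : {set {set T}}).

(* [x |-> (x, s x)] maps [moved s] onto [Tc s] and [agree s] onto
   [Tc s :&: Tc p] (lemma [N3E]). *)
Definition moved s := [set x | s x != x].
Definition agree s := [set x | (s x == p x) && (p x != x)].
Definition nontriv := [set X in porbits p | 1 < #|X|].
Definition arc z m := [set iter k p z | k : 'I_m].

Lemma agree_sub_moved s : agree s \subset moved s.
Proof. by apply/subsetP => x; rewrite !inE => /andP[/eqP ->]. Qed.

Lemma iter_porbit_inj z i j : i < #|porbit p z| -> j < #|porbit p z| ->
  iter i p z = iter j p z -> i = j.
Proof.
move=> hi hj e; apply/eqP.
rewrite -(nth_uniq z _ _ (uniq_traject_porbit p z)) ?size_traject //.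
by rewrite !nth_traject // e.
Qed.

Lemma iter_porbit_eq z i j : i < #|porbit p z| -> j < #|porbit p z| ->
  (iter i p z == iter j p z) = (i == j).
Proof. by move=> hi hj; apply/eqP/eqP => [|->//]; apply: iter_porbit_inj. Qed.

Lemma mem_iter_porbit z k : iter k p z \in porbit p z.
Proof. by rewrite -permX mem_porbit. Qed.

Lemma porbit_iterP z x : x \in porbit p z ->
  exists2 j, j < #|porbit p z| & x = iter j p z.
Proof. by rewrite porbit_traject => /trajectP. Qed.

Lemma porbits_eq X Y x : X \in porbits p -> Y \in porbits p -> x \in X -> x \in Y -> X = Y.
Proof.
move=> /imsetP[u _ ->] /imsetP[v _ ->] xu xv.
have e w : x \in porbit p w -> porbit p w = porbit p x.
  by move=> h; apply/eqP; rewrite eq_porbit_mem porbit_sym.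
by rewrite (e u) // (e v).
Qed.

Lemma porbit_of X x : X \in porbits p -> x \in X -> X = porbit p x.
Proof. by move=> hX hx; apply: porbits_eq hx (porbit_id p x) => //; apply: imset_f. Qed.

Lemma porbits_perm_closed X x : X \in porbits p -> x \in X -> p x \in X.
Proof. by move=> hX hx; rewrite (porbit_of hX hx) (mem_iter_porbit x 1). Qed.

Lemma nontriv_moved X x : X \in nontriv -> x \in X -> p x != x.
Proof.
rewrite inE => /andP[hX big] xX; move: big; rewrite (porbit_of hX xX) => big.
apply: contraTneq big => px; rewrite -leqNgt -(cards1 x) subset_leq_card //.
by apply/subsetP => _ /porbitP[i ->]; rewrite permX_fix ?inE.
Qed.

Lemma card_cover_porbits F : F \subset porbits p -> #|cover F| = weight F.
Proof.
move=> hF; apply/esym/eqP/trivIsetP => A B hA hB; rewrite -setI_eq0.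
apply: contraR => /set0Pn[x /setIP[xA xB]].
by rewrite (porbits_eq (subsetP hF _ hA) (subsetP hF _ hB) xA xB).
Qed.

Lemma card_arc z m : m <= #|porbit p z| -> #|arc z m| = m.
Proof.
move=> hm; rewrite card_imset ?card_ord // => i j /iter_porbit_inj e.
by apply/val_inj/e; apply: leq_trans hm.
Qed.

Lemma arc_sub_porbit z m : arc z m \subset porbit p z.
Proof. by apply/subsetP => _ /imsetP[k _ ->]; apply: mem_iter_porbit. Qed.

Lemma mem_arc z m j : j < m -> iter j p z \in arc z m.
Proof. by move=> hj; apply/imsetP; exists (Ordinal hj). Qed.

Lemma arcP z m x : x \in arc z m -> exists2 j, j < m & x = iter j p z.
Proof. by case/imsetP => k _ ->; exists k. Qed.

Definition admissible z m F :=
  [&& 0 < m, m.+2 <= #|porbit p z| & F \subset nontriv :\ porbit p z].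

Definition kept z m F := arc z m :|: cover F.

Definition shortcut_fun z m F x :=
  if x \in kept z m F then p x else if x == iter m p z then z else x.

(* The fallback to the identity only makes [shortcut] total; it is never used
   on admissible data. *)
Definition injective_or_id (f : T -> T) x := if injectiveb f then f x else x.

Lemma injective_or_id_inj f : injective (injective_or_id f).
Proof. by rewrite /injective_or_id; case: (injectiveP f) => [f_inj|_] x y // /f_inj. Qed.

Definition shortcut z m F : {perm T} := perm (@injective_or_id_inj (shortcut_fun z m F)).

Lemma shortcutE z m F : injective (shortcut_fun z m F) -> shortcut z m F =1 shortcut_fun z m F.
Proof. by move=> f_inj x; rewrite permE /injective_or_id; case: injectiveP. Qed.

Section Admissible.
Variables (z : T) (m : nat) (F : {set {set T}}).
Hypothesis adm : admissible z m F.
Local Notation y := (iter m p z).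
Local Notation S := (kept z m F).

Let m_gt0 : 0 < m. Proof. by case/and3P: adm. Qed.
Let m_small : m.+2 <= #|porbit p z|. Proof. by case/and3P: adm. Qed.
Let F_sub : F \subset nontriv :\ porbit p z. Proof. by case/and3P: adm. Qed.

Lemma admissible_porbits : F \subset porbits p.
Proof. by apply/subsetP => X /(subsetP F_sub); rewrite !inE => /and3P[]. Qed.

Lemma cover_notin_porbit x : x \in cover F -> x \notin porbit p z.
Proof.
case/bigcupP => X XF xX; apply: contraT; rewrite negbK => xz.
have := subsetP F_sub _ XF; rewrite !inE => /andP[XNz /andP[hX _]].
by rewrite (porbits_eq hX _ xX xz) ?eqxx // in XNz; apply/imsetP; exists z.
Qed.

Lemma cover_perm_closed x : x \in cover F -> p x \in cover F.
Proof.
case/bigcupP => X XF xX; apply/bigcupP; exists X => //.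
exact: porbits_perm_closed (subsetP admissible_porbits _ XF) xX.
Qed.

Lemma cover_moved x : x \in cover F -> p x != x.
Proof.
case/bigcupP => X XF; apply: nontriv_moved.
by have := subsetP F_sub _ XF; rewrite inE => /andP[].
Qed.

Lemma start_kept : z \in S.
Proof. by rewrite inE (mem_arc z m_gt0). Qed.

Lemma end_notin_kept : y \notin S.
Proof.
rewrite inE negb_or; apply/andP; split.
  by apply/negP => /arcP[j hj /eqP]; rewrite iter_porbit_eq; lia.
by apply/negP => /cover_notin_porbit; rewrite mem_iter_porbit.
Qed.

Lemma kept_step x : x \in S -> (p x \in S) || (p x == y).
Proof.
rewrite inE => /orP[/arcP[j hj ->]|xF]; last by rewrite inE cover_perm_closed ?orbT.
rewrite -iterS; have [jm|mj] := ltnP j.+1 m; first by rewrite inE (mem_arc z jm).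
by rewrite (_ : j.+1 = m) ?eqxx ?orbT //; lia.
Qed.

Lemma kept_perm_neq_start x : x \in S -> p x != z.
Proof.
rewrite inE => /orP[/arcP[j hj ->]|xF].
  by rewrite -[X in _ != X]/(iter 0 p z) -iterS iter_porbit_eq; lia.
apply: contraTneq (cover_perm_closed xF) => ->.
by apply/negP => /cover_notin_porbit; rewrite porbit_id.
Qed.

Lemma kept_moved x : x \in S -> p x != x.
Proof.
rewrite inE => /orP[/arcP[j hj ->]|]; last exact: cover_moved.
by rewrite -iterS iter_porbit_eq; lia.
Qed.

Lemma end_perm_neq_start : p y != z.
Proof. by rewrite -[X in _ != X]/(iter 0 p z) -iterS iter_porbit_eq; lia. Qed.

Lemma end_neq_start : y != z.
Proof. by rewrite -[X in _ != X]/(iter 0 p z) iter_porbit_eq; lia. Qed.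

Lemma shortcut_fun_inj : injective (shortcut_fun z m F).
Proof.
have split_ne a b : a \in S -> b \notin S -> shortcut_fun z m F a != shortcut_fun z m F b.
  move=> aS bS; rewrite /shortcut_fun aS (negbTE bS).
  case: ifP => [_|bNy]; first exact: kept_perm_neq_start.
  by apply: contraTneq (kept_step aS) => ->; rewrite (negbTE bS) bNy.
move=> a b; case aS: (a \in S); case bS: (b \in S).
- by rewrite /shortcut_fun aS bS; apply: perm_inj.
- by move/eqP; rewrite (negbTE (split_ne _ _ aS (negbT bS))).
- by move/eqP; rewrite eq_sym (negbTE (split_ne _ _ bS (negbT aS))).
rewrite /shortcut_fun aS bS.
case: ifP => [/eqP ->|_]; case: ifP => [/eqP ->|_] // e.
- by move: bS; rewrite -e start_kept.
- by move: aS; rewrite e start_kept.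
Qed.

Lemma card_kept : #|S| = m + weight F.
Proof.
rewrite cardsU card_arc ?card_cover_porbits ?admissible_porbits //; last lia.
suff -> : arc z m :&: cover F = set0 by rewrite cards0 subn0.
apply/setP => x; rewrite !inE.
by apply/negP => /andP[/(subsetP (arc_sub_porbit z m)) xz /cover_notin_porbit]; rewrite xz.
Qed.

Lemma card_kept_porbit : #|S :&: porbit p z| = m.
Proof.
rewrite -[RHS](@card_arc z m); last lia.
apply: eq_card => x; rewrite !inE; apply/idP/idP.
  by case/andP => /orP[//|/cover_notin_porbit/negbTE ->].
by move=> xa; rewrite xa (subsetP (arc_sub_porbit z m)).
Qed.

Lemma kept_porbits : [set X in porbits p | X \subset S] = F.
Proof.
apply/setP => X; rewrite inE; apply/andP/idP => [[hX XS]|XF]; last first.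
  split; first exact: subsetP admissible_porbits _ XF.
  by apply/subsetP => x xX; rewrite inE; apply/orP; right; apply/bigcupP; exists X.
case/imsetP: (hX) => w _ eX.
have : w \in S by apply: (subsetP XS); rewrite eX porbit_id.
rewrite inE => /orP[/(subsetP (arc_sub_porbit z m))|/bigcupP[Y YF wY]].
  rewrite -eq_porbit_mem -eX => /eqP eXz.
  by have := end_notin_kept; rewrite (subsetP XS) // eXz mem_iter_porbit.
by rewrite (porbits_eq hX (subsetP admissible_porbits _ YF) _ wY) // eX porbit_id.
Qed.

Lemma agree_shortcut : agree (shortcut z m F) = S.
Proof.
apply/setP => x; rewrite inE (shortcutE shortcut_fun_inj) /shortcut_fun.
case: ifP => [xS|_]; first by rewrite eqxx kept_moved.
case: ifP => [/eqP ->|_]; first by rewrite eq_sym (negbTE end_perm_neq_start).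
by case: eqP => // <-; rewrite eqxx.
Qed.

Lemma moved_shortcut : moved (shortcut z m F) = y |: S.
Proof.
apply/setP => x; rewrite in_setU1 [x \in moved _]inE (shortcutE shortcut_fun_inj) /shortcut_fun.
case: ifP => [xS|_]; first by rewrite orbT kept_moved.
by case: ifP => [/eqP ->|_]; rewrite ?eqxx // eq_sym end_neq_start.
Qed.

Lemma shortcut_end : shortcut z m F y = z.
Proof. by rewrite (shortcutE shortcut_fun_inj) /shortcut_fun (negbTE end_notin_kept) eqxx. Qed.

End Admissible.

Lemma moved_diff_agree_shortcut z m F : admissible z m F ->
  moved (shortcut z m F) :\: agree (shortcut z m F) = [set iter m p z].
Proof.
move=> adm; rewrite moved_shortcut // agree_shortcut //; apply/setP => x.
rewrite !inE; case: eqP => [->|] /=; last by rewrite andNb.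
by rewrite andbT; have := end_notin_kept adm; rewrite inE.
Qed.

Lemma shortcut_inj z1 m1 F1 z2 m2 F2 :
  admissible z1 m1 F1 -> admissible z2 m2 F2 ->
  shortcut z1 m1 F1 = shortcut z2 m2 F2 -> [/\ z1 = z2, m1 = m2 & F1 = F2].
Proof.
move=> adm1 adm2 e.
have ey : iter m1 p z1 = iter m2 p z2.
  by apply/set1P; rewrite -(moved_diff_agree_shortcut adm2) -e moved_diff_agree_shortcut ?set11.
have ez : z1 = z2 by rewrite -(shortcut_end adm1) -(shortcut_end adm2) e ey.
subst z2; have eS : kept z1 m1 F1 = kept z1 m2 F2.
  by rewrite -(agree_shortcut adm1) -(agree_shortcut adm2) e.
split=> //; first by rewrite -(card_kept_porbit adm1) -(card_kept_porbit adm2) eS.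
by rewrite -(kept_porbits adm1) -(kept_porbits adm2) eS.
Qed.

Definition close_perms r := [set s | (#|agree s| == r.-1) && (#|moved s| == r)].

Lemma shortcut_close r z m F :
  admissible z m F -> weight F + m = r.-1 -> shortcut z m F \in close_perms r.
Proof.
move=> adm wF; have m_gt0 : 0 < m by case/and3P: adm.
rewrite inE agree_shortcut // moved_shortcut // cardsU1 end_notin_kept //.
by rewrite card_kept // addnC wF eqxx /=; apply/eqP; lia.
Qed.

Section Recovery.
Variables (s : {perm T}) (y : T).
Hypothesis s_exit : moved s :\: agree s = [set y].
Local Notation z := (s y).
Local Notation L := #|porbit p z|.

Lemma exit_unique x : x \in moved s -> x \notin agree s -> x = y.
Proof. by move=> xM xS; apply/set1P; rewrite -s_exit inE xM xS. Qed.

Let y_moved : y \in moved s. Proof. by have := set11 y; rewrite -s_exit inE => /andP[]. Qed.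
Let y_notin_agree : y \notin agree s.
Proof. by have := set11 y; rewrite -s_exit inE => /andP[]. Qed.

Lemma start_agree : z \in agree s.
Proof.
apply: contraT => zNS; have := y_moved; rewrite inE => sy.
have zM : z \in moved s by rewrite inE (inj_eq perm_inj).
by move: sy; rewrite {1}(exit_unique zM zNS) eqxx.
Qed.

Lemma agree_step x : x \in agree s -> (p x \in agree s) || (p x == y).
Proof.
move=> xS; have := xS; rewrite inE => /andP[/eqP sx _]; rewrite -sx; case: (boolP (s x \in _)) => //= sxNS.
apply/eqP/exit_unique => //; rewrite inE (inj_eq perm_inj).
by have := subsetP (agree_sub_moved s) _ xS; rewrite inE.
Qed.

Lemma last_notin_agree : iter L.-1 p z \notin agree s.
Proof.
apply/negP => xS; have := xS; rewrite inE => /andP[/eqP + _].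
rewrite -iterS prednK ?lt0n ?card_porbit_neq0 // iter_porbit => /perm_inj exy.
by move: y_notin_agree; rewrite -exy xS.
Qed.

(* The first point of the cycle of [z] at which [s] leaves [p]; it is [y]. *)
Definition exit_time :=
  ex_minn (ex_intro (fun k => iter k p z \notin agree s) _ last_notin_agree).

Lemma exit_timeP : [/\ iter exit_time p z \notin agree s,
  forall j, j < exit_time -> iter j p z \in agree s & exit_time <= L.-1].
Proof.
rewrite /exit_time; case: ex_minnP => k kNS kmin; split => //; last exact: kmin last_notin_agree.
by move=> j jk; apply: contraT => /kmin; rewrite leqNgt jk.
Qed.

Local Notation k0 := exit_time.

Lemma exit_time_gt0 : 0 < k0.
Proof.
case: exit_timeP => kNS _ _; rewrite lt0n; apply: contraNneq kNS => ->.
exact: start_agree.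
Qed.

Lemma exit_iter : y = iter k0 p z.
Proof.
case: exit_timeP => kNS kS _.
have lt_pred : k0.-1 < k0 by have := exit_time_gt0; lia.
have := agree_step (kS _ lt_pred).
by rewrite -iterS prednK ?exit_time_gt0 // (negbTE kNS) => /eqP ->.
Qed.

Lemma exit_time_small : k0.+2 <= L.
Proof.
case: exit_timeP => _ _; rewrite leq_eqVlt => /orP[/eqP ek|]; last first.
  by have := card_porbit_neq0 p z; lia.
suff : y \in agree s by rewrite (negbTE y_notin_agree).
have py : p y = z.
  by rewrite {1}exit_iter -iterS ek prednK ?lt0n ?card_porbit_neq0 // iter_porbit.
by have := y_moved; rewrite !inE py eq_sym => ->; rewrite eqxx.
Qed.

Lemma agree_iter x d : x \in agree s ->
  (forall e, 0 < e <= d -> iter e p x != y) -> iter d p x \in agree s.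
Proof.
move=> xS; elim: d => [//|d IH] avoid_y.
have := agree_step (IH (fun e he => avoid_y e ltac:(lia))).
by rewrite -iterS (negbTE (avoid_y d.+1 _)) ?orbF //; lia.
Qed.

Lemma iter_start_neq_exit j : j < L -> j != k0 -> iter j p z != y.
Proof.
move=> jL jk; rewrite [X in _ != X]exit_iter iter_porbit_eq //.
by have := exit_time_small; lia.
Qed.

Lemma agree_porbit : agree s :&: porbit p z = arc z k0.
Proof.
have small := exit_time_small; apply/setP => x; rewrite inE; apply/idP/idP; last first.
  move=> xa; rewrite (subsetP (arc_sub_porbit z k0)) // andbT.
  by case/arcP: xa => j jk ->; case: exit_timeP => _ /(_ j jk).
case/andP => xS /porbit_iterP[j jL ex]; case: (ltngtP j k0) => [jk|kj|jk].
- by rewrite ex mem_arc.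
- have : iter (L.-1 - j) p x \in agree s.
    by apply: agree_iter => // e he; rewrite ex -iterD iter_start_neq_exit //; lia.
  by rewrite ex -iterD subnK ?(negbTE last_notin_agree) //; lia.
- by move: xS; rewrite ex jk -exit_iter (negbTE y_notin_agree).
Qed.

Lemma agree_out x : x \in agree s -> x \notin porbit p z -> porbit p x \subset agree s.
Proof.
move=> xS xNz; apply/subsetP => _ /porbitP[i ->]; rewrite permX.
apply: agree_iter => // e _; apply: contraNneq xNz => exy.
rewrite porbit_sym -(porbit_perm p e) permX exy porbit_sym.
by rewrite {1}exit_iter mem_iter_porbit.
Qed.

Definition cycles_in := [set X in porbits p | X \subset agree s].

Lemma agree_kept : agree s = kept z k0 cycles_in.
Proof.
apply/setP => x; rewrite [x \in kept _ _ _]inE; apply/idP/idP => [xS|].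
  case: (boolP (x \in porbit p z)) => [xz|xNz].
    by rewrite -agree_porbit inE xS xz.
  apply/orP; right; apply/bigcupP; exists (porbit p x); last exact: porbit_id.
  by rewrite inE agree_out //; apply/andP; split; first (apply/imsetP; exists x).
case/orP => [|/bigcupP[X]]; first by rewrite -agree_porbit inE => /andP[].
by rewrite inE => /andP[_ /subsetP XS] /XS.
Qed.

Lemma admissible_exit : admissible z k0 cycles_in.
Proof.
rewrite /admissible exit_time_gt0 exit_time_small /=; apply/subsetP => X.
rewrite /cycles_in !inE => /andP[hX XS]; rewrite hX /=; apply/andP; split.
  apply: contraNneq y_notin_agree => eX; apply: (subsetP XS).
  by rewrite eX {1}exit_iter mem_iter_porbit.
case/imsetP: hX => w _ eX.
have wS : w \in agree s by apply: (subsetP XS); rewrite eX porbit_id.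
have /subset_leq_card : [set w; p w] \subset X.
  by apply/subsetP => v; rewrite !inE eX => /orP[] /eqP ->; rewrite ?porbit_id ?(mem_iter_porbit w 1).
have pw : p w != w by move: wS; rewrite inE => /andP[].
by rewrite cards2 eq_sym pw.
Qed.

Lemma weight_exit r : s \in close_perms r -> weight cycles_in + k0 = r.-1.
Proof.
by rewrite inE agree_kept card_kept ?admissible_exit // addnC => /andP[/eqP].
Qed.

Lemma shortcut_exit : shortcut z k0 cycles_in = s.
Proof.
apply/permP => x; rewrite (shortcutE (shortcut_fun_inj admissible_exit)) /shortcut_fun -agree_kept.
case: ifP => [|xNS]; first by rewrite /agree inE => /andP[/eqP ->].
case: ifP => [/eqP ->|xNy]; first by rewrite -exit_iter.
apply/esym/eqP; apply: contraFT xNy => xM.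
by apply/eqP; rewrite -exit_iter; apply: exit_unique (negbT xNS); rewrite inE.
Qed.

Lemma exit_time_lt_card : k0 < #|T|.
Proof. exact: leq_trans (ltnW exit_time_small) (max_card _). Qed.

End Recovery.

Definition shortcut_data r := [set t : T * 'I_#|T| * {set {set T}} |
  admissible t.1.1 t.1.2 t.2 && (weight t.2 + t.1.2 == r.-1)].

Lemma card_close_perms_data r : 0 < r -> #|close_perms r| = #|shortcut_data r|.
Proof.
move=> r_gt0; pose sc (t : T * 'I_#|T| * {set {set T}}) := shortcut t.1.1 t.1.2 t.2.
have sc_inj : {in shortcut_data r &, injective sc}.
  move=> [[z1 m1] F1] [[z2 m2] F2]; rewrite !inE /= => /andP[adm1 _] /andP[adm2 _].
  by case/(shortcut_inj adm1 adm2) => -> /val_inj -> ->.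
rewrite -(card_in_imset sc_inj); apply: eq_card => s; apply/idP/imsetP.
  move=> s_close; have : #|moved s :\: agree s| == 1.
    have := s_close; rewrite inE => /andP[/eqP hS /eqP hM].
    by rewrite cardsD (setIidPr (agree_sub_moved s)) hS hM; apply/eqP; lia.
  case/cards1P => y s_exit.
  exists (s y, Ordinal (exit_time_lt_card s_exit), cycles_in s).
    by rewrite inE admissible_exit // (weight_exit s_exit s_close) eqxx.
  by rewrite /sc shortcut_exit.
case=> [[[z m] F]]; rewrite inE /= => /andP[adm /eqP wF] ->.
exact: shortcut_close.
Qed.

Lemma card_shortcut_data r : #|shortcut_data r| =
  \sum_(z : T) \sum_(1 <= m < #|porbit p z|.-1) nfam (nontriv :\ porbit p z) r.-1 m.
Proof.
rewrite -sum1_card; transitivity (\sum_(z : T) \sum_(m : 'I_#|T|)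
  \sum_(F | admissible z m F && (weight F + m == r.-1)) 1).
  by rewrite pair_big /= pair_big_dep /=; apply: eq_bigl => t; rewrite inE.
apply: eq_bigr => z _; rewrite -(big_mkord xpredT (fun m =>
  \sum_(F | admissible z m F && (weight F + m == r.-1)) 1)).
set L := #|porbit p z|; have L_le : L <= #|T| by apply: max_card.
have L_gt0 : 0 < L by rewrite lt0n card_porbit_neq0.
rewrite (big_cat_nat (n := L.-1)) /=; [|by []|exact: leq_trans (leq_pred _) L_le].
rewrite [X in _ + X]big1_seq ?addn0 => [|m]; last first.
  rewrite mem_index_iota => /andP[_ /andP[Lm _]]; apply: big_pred0 => F.
  by rewrite /admissible; apply/negbTE; lia.
case: (posnP L.-1) => [->|L1]; first by rewrite !big_geq.
rewrite big_ltn // big_pred0 => [|F]; last by rewrite /admissible ltnn.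
apply: eq_big_nat => m /andP[m_gt0 mL]; rewrite sum1_card; apply: eq_card => F.
by rewrite !inE /admissible m_gt0 (_ : m.+2 <= L) //; lia.
Qed.

Lemma sum_porbit (f : {set T} -> nat) :
  \sum_(z : T) f (porbit p z) = \sum_(X in porbits p) #|X| * f X.
Proof.
rewrite (partition_big (porbit p) (mem (porbits p))) => [|z _]; last exact: imset_f.
apply: eq_bigr => X /imsetP[w _ ->]; rewrite (eq_bigr (fun _ => f (porbit p w))).
  by rewrite (eq_bigl (mem (porbit p w))) ?sum_nat_const // => z; rewrite /= eq_porbit_mem.
by move=> z /eqP ->.
Qed.

Theorem card_close_perms r : 0 < r -> #|close_perms r| =
  \sum_(X in porbits p) #|X| * \sum_(1 <= m < #|X|.-1) nfam (nontriv :\ X) r.-1 m.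
Proof.
by move=> r_gt0; rewrite card_close_perms_data // card_shortcut_data
  (sum_porbit (fun X => \sum_(1 <= m < #|X|.-1) nfam (nontriv :\ X) r.-1 m)).
Qed.

End Shortcut.

(** * Counting families of sets by total size *)

Section FamilyCount.
Variable T : finType.
Implicit Types (A F : {set {set T}}) (Y : {set T}).

Lemma nfam_setU1 A Y c m : Y \notin A -> nfam (Y |: A) c m = nfam A c m + nfam A c (#|Y| + m).
Proof.
move=> YNA; rewrite /nfam -(cardsID [set F : {set {set T}} | Y \in F]) addnC.
congr (_ + _).
  apply: eq_card => F; rewrite !inE; case: (boolP (Y \in F)) => /= [YF|YNF].
    by apply/esym/negbTE; apply: contra YNA => /andP[/subsetP/(_ Y YF)].
  congr (_ && _); apply/idP/idP => [/subsetP FYA|]; last by move/subset_trans; apply; apply: subsetUr.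
  apply/subsetP => X XF; have := FYA X XF; rewrite in_setU1 => /orP[/eqP eX|//].
  by rewrite -eX XF in YNF.
set D := [set F : {set {set T}} | (F \subset A) && (weight F + (#|Y| + m) == c)].
have add_inj : {in D &, injective (fun F => Y |: F)}.
  move=> F1 F2; rewrite !inE => /andP[/subsetP h1 _] /andP[/subsetP h2 _] e.
  have n1 : Y \notin F1 by apply: contra YNA => /h1.
  have n2 : Y \notin F2 by apply: contra YNA => /h2.
  by rewrite -(setU1K n1) -(setU1K n2) e.
rewrite -(card_in_imset add_inj); apply: eq_card => F; rewrite !inE.
apply/andP/imsetP => [[/andP[FYA /eqP wF] YF]|[F' F'D ->]].
  exists (F :\ Y); last by rewrite setD1K.
  rewrite inE -wF /weight (big_setD1 Y YF) /= addnCA addnA eqxx andbT.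
  apply/subsetP => X; rewrite !inE => /andP[XY XF].
  by have := subsetP FYA X XF; rewrite in_setU1 (negbTE XY).
move: F'D; rewrite inE => /andP[F'A /eqP wF'].
have YNF' : Y \notin F' by apply: contra YNA => /(subsetP F'A).
split; last exact: setU11.
by rewrite setUS //= /weight big_setU1 //= -wF' /weight addnA [#|Y| + _]addnC.
Qed.

Section Pairs.
Variable A : {set {set T}}.
Hypothesis A_pairs : {in A, forall X : {set T}, #|X| = 2}.

Lemma nfam_pairs c m :
  nfam A c m = #|[set F : {set {set T}} | (F \subset A) && (#|F| * 2 + m == c)]|.
Proof.
apply: eq_card => F; rewrite !inE; case: (boolP (F \subset A)) => //= /subsetP FA.
rewrite /weight (eq_bigr (fun _ => 2)) ?sum_nat_const // => X /FA; exact: A_pairs.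
Qed.

Lemma nfam_pairs_binz c m (k : int) : (c%:Z - m%:Z = k * 2)%R -> nfam A c m = binz #|A| k.
Proof.
rewrite nfam_pairs; case: k => [j|j] e.
  rewrite /= -cards_draws; apply: eq_card => F; rewrite !inE; congr (_ && _).
  (* [lia] fails on goals mentioning the cardinal of a set of sets. *)
  by apply/eqP/eqP; move: #|F| e => x; lia.
apply: eq_card0 => F; rewrite !inE; apply/negbTE; move: #|F| e => x; rewrite NegzE; lia.
Qed.

Lemma nfam_pairs_eq0 c m k : c + m = k.*2.+1 -> nfam A c m = 0.
Proof.
rewrite nfam_pairs => cm; apply: eq_card0 => F; rewrite !inE; apply/negbTE.
by apply/nandP; right; apply/eqP; move: #|F| cm => x; rewrite -muln2; lia.
Qed.

End Pairs.
End FamilyCount.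

(** * Restriction to the cycle type *)

Section CycleType.
Variables (T : finType) (p : {perm T}).

Definition orbits_of_size k := [set X in porbits p | #|X| == k].
Definition big_cycles := [set X in porbits p | 2 < #|X|].

Lemma nontrivE : nontriv p = big_cycles :|: orbits_of_size 2.
Proof.
apply/setP => X; rewrite !inE; case: (X \in porbits p) => //=.
by case: ltngtP => //= h; lia.
Qed.

Lemma nontriv_setD X : X \in big_cycles ->
  nontriv p :\ X = (big_cycles :\ X) :|: orbits_of_size 2.
Proof.
move=> Xbig; rewrite nontrivE setDUl; congr (_ :|: _); apply/setDidPl.
rewrite disjoint_sym disjoints1 inE negb_and; move: Xbig; rewrite inE => /andP[_ ?].
by apply/orP; right; apply/eqP; lia.
Qed.

Lemma card_close_perms_big r : 0 < r -> #|close_perms p r| =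
  \sum_(X in big_cycles) #|X| * \sum_(1 <= m < #|X|.-1) nfam (nontriv p :\ X) r.-1 m.
Proof.
move=> r_gt0; rewrite card_close_perms // (big_setID big_cycles) /=.
rewrite (setIidPr _) ?[X in _ + X]big1 ?addn0 // => [X|]; last first.
  by apply/subsetP => X; rewrite inE => /andP[].
rewrite !inE andbC; case: (X \in porbits p) => //= small.
by rewrite big_geq ?muln0 //; lia.
Qed.

Lemma big_cycle_notin_pairs X : X \in big_cycles -> X \notin orbits_of_size 2.
Proof. by rewrite !inE => /andP[_ ?]; apply/nandP; right; apply/eqP; lia. Qed.

Lemma card_close_perms_one_cycle r X : 0 < r -> big_cycles = [set X] ->
  #|close_perms p r| = #|X| * \sum_(1 <= m < #|X|.-1) nfam (orbits_of_size 2) r.-1 m.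
Proof.
move=> r_gt0 big; rewrite card_close_perms_big // big big_set1.
by rewrite nontriv_setD ?big ?set11 // setDv set0U.
Qed.

Lemma card_close_perms_two_cycles r X Y : 0 < r -> big_cycles = [set X; Y] -> X != Y ->
  #|close_perms p r| =
    #|X| * \sum_(1 <= m < #|X|.-1)
             (nfam (orbits_of_size 2) r.-1 m + nfam (orbits_of_size 2) r.-1 (#|Y| + m))
  + #|Y| * \sum_(1 <= m < #|Y|.-1)
             (nfam (orbits_of_size 2) r.-1 m + nfam (orbits_of_size 2) r.-1 (#|X| + m)).
Proof.
move=> r_gt0 big XY; have YX : Y != X by rewrite eq_sym.
have [Xbig Ybig] : X \in big_cycles /\ Y \in big_cycles by rewrite big !inE !eqxx ?orbT.
rewrite card_close_perms_big // big big_setU1 ?inE //= big_set1 !nontriv_setD //.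
rewrite big setU1K ?inE // [[set X; Y]]setUC setU1K ?inE //.
by rewrite !(eq_bigr _ (fun m _ => nfam_setU1 r.-1 m (big_cycle_notin_pairs _))).
Qed.

End CycleType.

Section Transpositions.
Variables (n : nat) (p : {perm 'I_n}).

Lemma Tc_moved (s : {perm 'I_n}) : Tc s = [set (x, s x) | x in moved s].
Proof.
apply/setP => -[a b]; rewrite inE /=; apply/andP/imsetP => [[/eqP -> sa]|[x]].
  by exists a; rewrite ?inE.
by rewrite inE => sx [-> ->].
Qed.

Lemma TcI_agree (s : {perm 'I_n}) : Tc s :&: Tc p = [set (x, s x) | x in agree p s].
Proof.
apply/setP => -[a b]; rewrite !inE /=; apply/andP/imsetP => [[/andP[/eqP -> _] /andP[/eqP sp pa]]|[x]].
  by exists a; rewrite // inE sp eqxx.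
by rewrite inE => /andP[/eqP sp px] [-> ->]; rewrite sp !eqxx px.
Qed.

Lemma N3E r : N3 r p = close_perms p r.
Proof.
have graph_inj (s : {perm 'I_n}) (A : {set 'I_n}) : #|[set (x, s x) | x in A]| = #|A|.
  by apply: card_imset => x y [].
by apply/setP => s; rewrite !inE TcI_agree Tc_moved !graph_inj.
Qed.

End Transpositions.

(** * Binomial sums *)

Lemma binz_sym a k : binz a k = binz a (a%:Z - k)%R.
Proof.
case: k => j.
  have [ja|aj] := leqP j a; first by rewrite subzn //= bin_sub.
  have -> : (a%:Z - j%:Z = Negz (j - a).-1)%R by rewrite NegzE; lia.
  by rewrite /= bin_small.
have -> : (a%:Z - Negz j = (a + j.+1)%:Z)%R by rewrite NegzE; lia.
by rewrite /= bin_small //; lia.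
Qed.

Lemma binzS a k : binz a.+1 k = binz a k + binz a (k - 1)%R.
Proof.
case: k => [[|j]|j].
- by rewrite (_ : (Posz 0 - 1 = Negz 0)%R) //= !bin0.
- by rewrite (_ : ((j.+1)%:Z - 1 = j%:Z)%R) /= ?binS //; lia.
- by rewrite (_ : (Negz j - 1 = Negz j.+1)%R) // !NegzE; lia.
Qed.

Lemma big_nat_odd_even_doubleS (f : nat -> nat) k :
  \sum_(1 <= m < k.*2.+1) f m = \sum_(1 <= i < k.+1) f i.*2.-1 + \sum_(1 <= i < k.+1) f i.*2.
Proof.
elim: k => [|k IH]; first by rewrite !big_geq.
rewrite doubleS !(big_nat_recr _ _ _ (_ : 1 <= _.+1)) //= IH doubleS /=; lia.
Qed.

Lemma big_nat_odd_even_double (f : nat -> nat) k :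
  \sum_(1 <= m < k.*2) f m = \sum_(1 <= i < k.+1) f i.*2.-1 + \sum_(1 <= i < k) f i.*2.
Proof.
case: k => [|k]; first by rewrite !big_geq.
rewrite doubleS (big_nat_recr k.*2.+1) // big_nat_odd_even_doubleS.
by rewrite [\sum_(1 <= i < k.+2) _]big_nat_recr //= ?doubleS /=; lia.
Qed.

Section PairSums.
Variables (T : finType) (P : {set {set T}}).
Hypothesis P_pairs : {in P, forall X : {set T}, #|X| = 2}.
Variable t : nat.
Local Notation a := #|P|.

Lemma nfam_pairs_odd_total c i k : c = k.*2.+1 -> 0 < i ->
  nfam P c i.*2.-1 = binz a (k%:Z - i%:Z + 1)%R /\ nfam P c i.*2 = 0.
Proof.
move=> -> i_gt0; split; first by apply: (nfam_pairs_binz P_pairs); rewrite -!muln2; lia.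
by apply: (nfam_pairs_eq0 P_pairs (k := k + i)); rewrite -!muln2; lia.
Qed.

Lemma nfam_pairs_even_total c i k : c = k.*2 -> 0 < i ->
  nfam P c i.*2 = binz a (k%:Z - i%:Z)%R /\ nfam P c i.*2.-1 = 0.
Proof.
move=> -> i_gt0; split; first by apply: (nfam_pairs_binz P_pairs); rewrite -!muln2; lia.
by apply: (nfam_pairs_eq0 P_pairs (k := k + i - 1)); rewrite -!muln2; lia.
Qed.

Hypothesis t_gt0 : 0 < t.

Lemma sum_nfam_odd_cycle (r s : nat) : (r == 2 * t) || (r == 2 * t + 1) -> 2 <= s ->
  \sum_(1 <= m < (2 * s - 1).-1) nfam P r.-1 m =
  (if r == 2 * t then \sum_(1 <= i < s) binz a (t%:Z - i%:Z)%R
   else \sum_(1 <= i < s.-1) binz a (t%:Z - i%:Z)%R).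
Proof.
move=> rt s2; rewrite (_ : (2 * s - 1).-1 = s.-1.*2); last by rewrite -muln2; lia.
rewrite big_nat_odd_even_double prednK; last lia.
case/orP: rt => /eqP -> ; [rewrite eqxx | rewrite ifN; last lia].
- have cE : (2 * t).-1 = t.-1.*2.+1 by rewrite -muln2; lia.
  rewrite [X in _ + X]big1_seq ?addn0 => [|i /andP[_]]; last first.
    by rewrite mem_index_iota => /andP[i_gt0 _]; case: (nfam_pairs_odd_total cE i_gt0).
  apply: eq_big_nat => i /andP[i_gt0 _]; case: (nfam_pairs_odd_total cE i_gt0) => -> _.
  by congr binz; lia.
- have cE : (2 * t + 1).-1 = t.*2 by rewrite -muln2; lia.
  rewrite [X in X + _]big1_seq ?add0n => [|i /andP[_]]; last first.
    by rewrite mem_index_iota => /andP[i_gt0 _]; case: (nfam_pairs_even_total cE i_gt0).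
  by apply: eq_big_nat => i /andP[i_gt0 _]; case: (nfam_pairs_even_total cE i_gt0).
Qed.

Lemma sum_nfam_even_cycle_2t s : 2 <= s <= 2 * t - 2 -> a = 2 * t - s - 2 ->
  2 * s * \sum_(1 <= m < (2 * s).-1) (nfam P (2 * t).-1 m + nfam P (2 * t).-1 (3 + m))
  + 3 * (nfam P (2 * t).-1 1 + nfam P (2 * t).-1 (2 * s + 1)) =
  2 * (2 * s + 3) * binz a (t%:Z - 1)%R
  + 2 * s * \sum_(1 <= i < s.-1) binz a.+1 (t%:Z - i%:Z - 1)%R.
Proof.
move=> /andP[s2 s_le] aE; have cE : (2 * t).-1 = t.-1.*2.+1 by rewrite -muln2; lia.
have Nodd i : 0 < i -> nfam P (2 * t).-1 i.*2.-1 = binz a (t%:Z - i%:Z)%R.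
  by case/(nfam_pairs_odd_total cE) => -> _; congr binz; lia.
have Neven i : 0 < i -> nfam P (2 * t).-1 i.*2 = 0 by case/(nfam_pairs_odd_total cE).
(* As in [nfam_pairs_binz], [lia] needs [#|P|] abstracted. *)
move: a aE Nodd => b bE Nodd.
have N1 : nfam P (2 * t).-1 1 = binz b (t%:Z - 1)%R by rewrite (Nodd 1).
have N2s1 : nfam P (2 * t).-1 (2 * s + 1) = binz b (t%:Z - 1)%R.
  rewrite (_ : 2 * s + 1 = s.+1.*2.-1); last by rewrite -muln2; lia.
  by rewrite Nodd // binz_sym; congr binz; lia.
rewrite (_ : (2 * s).-1 = s.-1.*2.+1); last by rewrite -muln2; lia.
rewrite big_nat_odd_even_doubleS prednK; last lia.
have S_odd : \sum_(1 <= i < s) (nfam P (2 * t).-1 i.*2.-1 + nfam P (2 * t).-1 (3 + i.*2.-1))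
    = \sum_(1 <= i < s) binz b (t%:Z - i%:Z)%R.
  apply: eq_big_nat => i /andP[i_gt0 _]; rewrite Nodd // (_ : 3 + _ = i.+1.*2) ?Neven ?addn0 //.
  by rewrite -!muln2; lia.
have S_even : \sum_(1 <= i < s) (nfam P (2 * t).-1 i.*2 + nfam P (2 * t).-1 (3 + i.*2))
    = \sum_(1 <= i < s) binz b (t%:Z - i%:Z - 1 - 1)%R.
  apply: eq_big_nat => i /andP[i_gt0 _]; rewrite Neven // (_ : 3 + _ = i.+2.*2.-1).
    by rewrite Nodd //; congr binz; lia.
  by rewrite -!muln2; lia.
have E1 : \sum_(1 <= i < s) binz b (t%:Z - i%:Z)%R
    = binz b (t%:Z - 1)%R + \sum_(1 <= i < s.-1) binz b (t%:Z - i%:Z - 1)%R.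
  rewrite big_ltn; last lia.
  by rewrite big_add1; congr (_ + _); apply: eq_bigr => i _; congr binz; lia.
have E2 : \sum_(1 <= i < s) binz b (t%:Z - i%:Z - 1 - 1)%R
    = \sum_(1 <= i < s.-1) binz b (t%:Z - i%:Z - 1 - 1)%R + binz b (t%:Z - 1)%R.
  rewrite -{1}(prednK (_ : 0 < s)) ?big_nat_recr //=; try lia.
  by congr (_ + _); rewrite binz_sym; congr binz; lia.
have E3 : \sum_(1 <= i < s.-1) binz b.+1 (t%:Z - i%:Z - 1)%R
    = \sum_(1 <= i < s.-1) binz b (t%:Z - i%:Z - 1)%R
      + \sum_(1 <= i < s.-1) binz b (t%:Z - i%:Z - 1 - 1)%R.
  by rewrite -big_split /=; apply: eq_bigr => i _; rewrite binzS.
rewrite S_odd S_even N1 N2s1 E1 E2 E3; lia.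
Qed.

Lemma sum_nfam_even_cycle_2tS s : 2 <= s ->
  2 * s * \sum_(1 <= m < (2 * s).-1) (nfam P (2 * t + 1).-1 m + nfam P (2 * t + 1).-1 (3 + m))
  + 3 * (nfam P (2 * t + 1).-1 1 + nfam P (2 * t + 1).-1 (2 * s + 1)) =
  2 * s * \sum_(1 <= i < s) binz a.+1 (t%:Z - i%:Z)%R.
Proof.
move=> s2; have cE : (2 * t + 1).-1 = t.*2 by rewrite -muln2; lia.
have Neven i : 0 < i -> nfam P (2 * t + 1).-1 i.*2 = binz a (t%:Z - i%:Z)%R.
  by case/(nfam_pairs_even_total cE).
have Nodd i : 0 < i -> nfam P (2 * t + 1).-1 i.*2.-1 = 0 by case/(nfam_pairs_even_total cE).
have N1 : nfam P (2 * t + 1).-1 1 = 0 by apply: (Nodd 1).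
have N2s1 : nfam P (2 * t + 1).-1 (2 * s + 1) = 0.
  by rewrite (_ : 2 * s + 1 = s.+1.*2.-1) ?Nodd // -muln2; lia.
rewrite N1 N2s1 addn0 muln0 addn0 (_ : (2 * s).-1 = s.-1.*2.+1); last by rewrite -muln2; lia.
rewrite big_nat_odd_even_doubleS prednK; last lia.
rewrite addnC -big_split /=; congr (_ * _); apply: eq_big_nat => i /andP[i_gt0 _].
rewrite binzS Nodd // (_ : 3 + i.*2.-1 = i.+1.*2) 1?(_ : 3 + i.*2 = i.+2.*2.-1); try by rewrite -!muln2; lia.
by rewrite Neven // Nodd // Neven // addn0; congr (_ + binz _ _); lia.
Qed.

End PairSums.

Section CycleCounts.
Variables (n : nat) (p : {perm 'I_n}).

Lemma big_cyclesE (K : pred nat) : {subset K <= [pred k | 2 < k]} ->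
  (forall k, 2 < k -> ~~ K k -> cycle_count p k = 0) ->
  big_cycles p = [set X in porbits p | K #|X|].
Proof.
move=> K_big K_only; apply/setP => X; rewrite !inE; case: (boolP (X \in porbits p)) => //= hX.
apply/idP/idP => [X_big|/K_big //]; apply: contraT => XNK.
have : 0 < cycle_count p #|X| by apply/card_gt0P; exists X; rewrite inE hX eqxx.
by rewrite K_only.
Qed.

Lemma card_orbits_of_size2 : {in orbits_of_size p 2, forall X : {set 'I_n}, #|X| = 2}.
Proof. by move=> X; rewrite inE => /andP[_ /eqP]. Qed.

Lemma cycle_count_eq1 k : cycle_count p k = 1 -> exists2 X, orbits_of_size p k = [set X] & #|X| = k.
Proof.
move=> /eqP/cards1P[X eX]; exists X => //.
by have := set11 X; rewrite -eX inE => /andP[_ /eqP].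
Qed.

Lemma card_N3_odd_cycle (t r s : nat) : 2 <= t -> (r == 2 * t) || (r == 2 * t + 1) -> 2 <= s <= r ->
  (forall k, 1 < k -> cycle_count p k =
     (if k == 2 * s - 1 then 1 else if k == 2 then r - s else 0)) ->
  #|N3 r p| =
    (if r == 2 * t
     then (2 * s - 1) * \sum_(1 <= i < s) binz (r - s) (t%:Z - i%:Z)%R
     else (2 * s - 1) * \sum_(1 <= i < s.-1) binz (r - s) (t%:Z - i%:Z)%R).
Proof.
move=> t2 rt /andP[s2 sr] hc.
have [X0 eX0 X0_size] : exists2 X0, orbits_of_size p (2 * s - 1) = [set X0] & #|X0| = 2 * s - 1.
  by apply: cycle_count_eq1; rewrite hc ?eqxx //; lia.
have big : big_cycles p = [set X0].
  rewrite -eX0 (big_cyclesE (K := pred1 (2 * s - 1))) => [//|k /eqP ->|k k2 kN].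
    by rewrite inE; lia.
  by rewrite hc ?(negbTE kN) ?ifN //; lia.
have npairs : #|orbits_of_size p 2| = r - s by rewrite [LHS]hc ?ifN //; lia.
have r_gt0 : 0 < r by case/orP: rt => /eqP ->; lia.
rewrite N3E (card_close_perms_one_cycle r_gt0 big) X0_size.
rewrite (sum_nfam_odd_cycle card_orbits_of_size2 (t := t)) ?npairs //; last lia.
by case: ifP.
Qed.

Lemma card_N3_even_cycle (t r s : nat) : 2 <= t -> (r == 2 * t) || (r == 2 * t + 1) ->
  2 <= s <= r - 2 ->
  (forall k, 1 < k -> cycle_count p k =
     (if k == 2 * s then 1 else if k == 3 then 1 else if k == 2 then r - s - 2 else 0)) ->
  #|N3 r p| =
    (if r == 2 * t
     then 2 * (2 * s + 3) * binz (r - s - 2) (t%:Z - 1)%R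
          + 2 * s * \sum_(1 <= i < s.-1) binz (r - s - 1) (t%:Z - i%:Z - 1)%R
     else 2 * s * \sum_(1 <= i < s) binz (r - s - 1) (t%:Z - i%:Z)%R).
Proof.
move=> t2 rt /andP[s2 sr] hc.
have [X0 eX0 X0_size] : exists2 X0, orbits_of_size p (2 * s) = [set X0] & #|X0| = 2 * s.
  by apply: cycle_count_eq1; rewrite hc ?eqxx //; lia.
have [X3 eX3 X3_size] : exists2 X3, orbits_of_size p 3 = [set X3] & #|X3| = 3.
  by apply: cycle_count_eq1; rewrite hc ?ifN //; lia.
have X03 : X0 != X3 by apply/eqP => e; move: X0_size; rewrite e X3_size; lia.
have big : big_cycles p = [set X0; X3].
  rewrite (big_cyclesE (K := pred2 (2 * s) 3)).
  - apply/setP => X; rewrite !inE andb_orr -!(in_set1 X) -eX0 -eX3.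
    by rewrite /orbits_of_size !inE.
  - by move=> k; rewrite !inE => /orP[] /eqP ->; lia.
  - move=> k k2 /norP[k2s k3]; rewrite hc ?(negbTE k2s) ?(negbTE k3) ?ifN //; lia.
have npairs : #|orbits_of_size p 2| = r - s - 2 by rewrite [LHS]hc ?ifN //; lia.
have r_gt0 : 0 < r by case/orP: rt => /eqP ->; lia.
rewrite N3E (card_close_perms_two_cycles r_gt0 big X03).
rewrite X0_size X3_size /= big_nat1 (_ : r - s - 1 = (r - s - 2).+1); last lia.
have t_gt0 : 0 < t by lia.
rewrite -npairs; case/orP: rt => /eqP r_eq; rewrite r_eq; [rewrite eqxx | rewrite ifN; last lia].
- rewrite (sum_nfam_even_cycle_2t card_orbits_of_size2 t_gt0) //; last by rewrite npairs r_eq.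
  by move: sr; rewrite r_eq; lia.
- exact: (sum_nfam_even_cycle_2tS card_orbits_of_size2 t_gt0).
Qed.
End CycleCounts.

Theorem lemma13 (t r n : nat) :
  2 <= t -> (r == 2 * t) || (r == 2 * t + 1) -> 2 * r - 1 <= n ->
  (forall (s : nat) (p : {perm 'I_n}),
     2 <= s <= r ->
     (forall k, 1 < k -> cycle_count p k =
        (if k == 2 * s - 1 then 1 else if k == 2 then r - s else 0)) ->
     #|N3 r p| =
       (if r == 2 * t
        then (2 * s - 1) * \sum_(1 <= i < s) binz (r - s) (t%:Z - i%:Z)%R
        else (2 * s - 1) * \sum_(1 <= i < s.-1) binz (r - s) (t%:Z - i%:Z)%R)) /\
  (forall (s : nat) (p : {perm 'I_n}),
     2 <= s <= r - 2 ->
     (forall k, 1 < k -> cycle_count p k =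
        (if k == 2 * s then 1 else if k == 3 then 1
         else if k == 2 then r - s - 2 else 0)) ->
     #|N3 r p| =
       (if r == 2 * t
        then 2 * (2 * s + 3) * binz (r - s - 2) (t%:Z - 1)%R
             + 2 * s * \sum_(1 <= i < s.-1) binz (r - s - 1) (t%:Z - i%:Z - 1)%R
        else 2 * s * \sum_(1 <= i < s) binz (r - s - 1) (t%:Z - i%:Z)%R)).
Proof.
move=> t2 rt _; split=> s p; [exact: card_N3_odd_cycle | exact: card_N3_even_cycle].
Qed.
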